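(* Let $b\in B$, $i\in I$, $m=\varphi_i(b)$, $j\ge0$, $\mu\in P$, and put $n=\langle h_i,\mu\rangle+m$. Assume $n\ge0$. Then $\tilde f_i^{\,n}$ restricts to a bijection $$\tilde f_i^{\,n}:\ \bigsqcup_{t=0}^m\mathcal P_j(\tilde f_i^tb,\mu+t\alpha_i)\ \longrightarrow\ \bigsqcup_{t=0}^m\mathcal P_j\bigl(\tilde f_i^tb,\ r_i(\mu+(m-t)\alpha_i)\bigr),$$ where $\tilde f_i$ acts on $B^{\otimes(j+1)}$ by the tensor product rule.
   Context: $\mathfrak g$ is an affine Kac–Moody algebra with index set $I$ ($0$ the special node), Cartan matrix $(a_{ij})$, simple coroots $h_i$, fundamental weights $\Lambda_i$, null root $\delta$. $P=\bigoplus_{i\in I}\mathbb Z\Lambda_i\oplus\mathbb Z\delta$, $P_{cl}=\bigoplus_{i\in I}\mathbb Z\Lambda_i$, $cl:P\to P_{cl}$ the projection killing $\delta$; simple roots $\alpha_i=\sum_ja_{ji}\Lambda_j+\delta_{i0}\delta\in P$; $r_i(\mu)=\mu-\langle h_i,\mu\rangle\alpha_i$. $B$ is a finite crystal with $wt:B\to P_{cl}$, Kashiwara operators $\tilde e_i,\tilde f_i$, $\varepsilon_i(b)=\max\{k:\tilde e_i^kb\ne0\}$, $\varphi_i(b)=\max\{k:\tilde f_i^kb\ne0\}$, $\varphi_i(b)-\varepsilon_i(b)=\langle h_i,wt\,b\rangle$, $wt(\tilde f_ib)=wt(b)-cl(\alpha_i)$. Tensor products: $wt$ is additive; $\tilde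 e_i(b_1\otimes b_2)=\tilde e_ib_1\otimes b_2$ if $\varphi_i(b_1)\ge\varepsilon_i(b_2)$ and $=b_1\otimes\tilde e_ib_2$ otherwise; $\tilde f_i(b_1\otimes b_2)=\tilde f_ib_1\otimes b_2$ if $\varphi_i(b_1)>\varepsilon_i(b_2)$ and $=b_1\otimes\tilde f_ib_2$ otherwise. For $j\ge0$, $b\in B$, $\mu\in P$: $\mathcal P_j(b,\mu)=\{b\otimes b_j\otimes\cdots\otimes b_1\in B^{\otimes(j+1)}:wt(b_j)+\cdots+wt(b_1)=cl(\mu)\}$. *)

From HB Require Import structures.
From mathcomp Require Import all_boot all_order all_algebra.
Set Implicit Arguments. Unset Strict Implicit. Unset Printing Implicit Defensive.
Import Order.TTheory GRing.Theory Num.Theory.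

Local Open Scope ring_scope.

Section Weights.
Variable I : finType.

(* P_cl = (+)_{i in I} Z Lambda_i : coefficient functions on the Lambda_i. *)
Definition Pcl := {ffun I -> int}.
(* P = P_cl (+) Z delta : (coefficients of the Lambda_j, coefficient of delta). *)
Definition P := (Pcl * int)%type.

Definition cl (mu : P) : Pcl := mu.1.
(* <h_i, Lambda_j> = delta_ij, <h_i, delta> = 0. *)
Definition pairing (i : I) (mu : P) : int := mu.1 i.

Definition addP (mu nu : P) : P := ([ffun j => mu.1 j + nu.1 j], mu.2 + nu.2).
Definition scaleP (k : int) (mu : P) : P := ([ffun j => k * mu.1 j], k * mu.2).
Definition subPcl (x y : Pcl) : Pcl := [ffun j => x j - y j].

(* alpha_i = sum_j a_{ji} Lambda_j + delta_{i0} delta ; i0 is the special node 0 *)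
Definition alpha (A : I -> I -> int) (i0 i : I) : P :=
  ([ffun j => A j i], if i == i0 then 1 else 0).

Definition refl (A : I -> I -> int) (i0 i : I) (mu : P) : P :=
  addP mu (scaleP (- pairing i mu) (alpha A i0 i)).

Definition is_GCM (A : I -> I -> int) : Prop :=
  [/\ forall i, A i i = 2,
      forall i j, i != j -> A i j <= 0 &
      forall i j, A i j = 0 <-> A j i = 0].

Definition indecomposable (A : I -> I -> int) : Prop :=
  forall J : {set I}, J != set0 -> J != setT ->
    exists j k, [/\ j \in J, k \notin J & A j k != 0].

(* Affine type (Kac, Thm 4.3): indecomposable GCM admitting u > 0 with A u = 0. *)
Definition affine_cartan (A : I -> I -> int) : Prop :=
  [/\ is_GCM A, indecomposable A &
      exists u : I -> int, (forall i, 0 < u i) /\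
        (forall i, \sum_(j : I) A i j * u j = 0)].

End Weights.

(* Crystals: a finite set with weight and Kashiwara operators (0 = None). *)
Record crystal (I : finType) := Crystal {
  ctype : finType;
  cwt : ctype -> Pcl I;
  ce : I -> ctype -> option ctype;
  cf : I -> ctype -> option ctype }.
Arguments cwt {I} c _.
Arguments ce {I} c _ _.
Arguments cf {I} c _ _.

Definition oiter (T : Type) (g : T -> option T) (k : nat) (x : T) : option T :=
  iter k (fun o => obind g o) (Some x).

Section CrystalDefs.
Variable I : finType.

(* eps_i(b) = max{k : e_i^k b <> 0}, phi_i(b) = max{k : f_i^k b <> 0}
   (k ranges up to #|B|, which is enough in a finite crystal). *)
Definition eps (C : crystal I) (i : I) (b : ctype C) : nat :=
  (\max_(k < #|{: ctype C}|.+1 | isSome (oiter (ce C i) k b)) k)%N.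
Definition phi (C : crystal I) (i : I) (b : ctype C) : nat :=
  (\max_(k < #|{: ctype C}|.+1 | isSome (oiter (cf C i) k b)) k)%N.

End CrystalDefs.
Arguments eps {I} C i b.
Arguments phi {I} C i b.

Section CrystalDefs2.
Variable I : finType.

Definition is_crystal (A : I -> I -> int) (i0 : I) (C : crystal I) : Prop :=
  [/\ forall i (b b' : ctype C), ce C i b = Some b' <-> cf C i b' = Some b,
      forall i (b : ctype C), (phi C i b)%:Z - (eps C i b)%:Z = cwt C b i &
      forall i (b b' : ctype C), cf C i b = Some b' ->
         cwt C b' = subPcl (cwt C b) (cl (alpha A i0 i))].

(* Tensor product with the (Kashiwara) tensor product rule. *)
Definition tensor (C1 C2 : crystal I) : crystal I :=
  @Crystal I (ctype C1 * ctype C2)%type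
    (fun x => [ffun j => cwt C1 x.1 j + cwt C2 x.2 j])
    (fun i x => if (eps C2 i x.2 <= phi C1 i x.1)%N
                then omap (fun y => (y, x.2)) (ce C1 i x.1)
                else omap (fun y => (x.1, y)) (ce C2 i x.2))
    (fun i x => if (eps C2 i x.2 < phi C1 i x.1)%N
                then omap (fun y => (y, x.2)) (cf C1 i x.1)
                else omap (fun y => (x.1, y)) (cf C2 i x.2)).

Definition unitC : crystal I :=
  @Crystal I unit (fun _ => [ffun=> 0]) (fun _ _ => None) (fun _ _ => None).

Fixpoint tailpow (B : crystal I) (j : nat) : crystal I :=
  match j with
  | O => unitC
  | j'.+1 => tensor B (tailpow B j')
  end.

(* B^{(x)(j+1)} : elements b (x) b_j (x) ... (x) b_1 *)
Definition tpow (B : crystal I) (j : nat) : crystal I := tensor B (tailpow B j).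

(* P_j(b, mu), where b is given as an option (None = 0 gives the empty set) *)
Definition Pj (B : crystal I) (j : nat) (ob : option (ctype B)) (mu : P I)
  : {set ctype (tpow B j)} :=
  [set x : ctype (tpow B j) | (Some x.1 == ob) && (cwt (tailpow B j) x.2 == cl mu)].

End CrystalDefs2.

From HB Require Import structures.
From mathcomp Require Import all_boot all_order all_algebra.
From mathcomp Require Import zify ring.
Set Implicit Arguments. Unset Strict Implicit. Unset Printing Implicit Defensive.
Import Order.TTheory GRing.Theory Num.Theory.
Local Open Scope ring_scope.

(* Along f_i the string of a tensor product b' (x) r is explicit: f_i first
   moves b' for phi_i(b') - eps_i(r) steps, then moves r; e_i does the same
   with the roles of the factors exchanged.  For b' = f_i^t b in the left-hand
   union one has phi_i(b' (x) r) >= n + t, so f_i^n is defined and moves b' by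
   some s <= m - t steps along the string of b and r by n - s steps; the
   weight of r then places the image at index t + s of the right-hand union.
   Symmetrically e_i^n maps the right-hand union back, and e_i^n inverts f_i^n.
   Of the Cartan matrix only a_ii = 2 is used: it makes the weight change along
   a string strictly monotone, so the bounded maxima defining phi_i and eps_i
   are the true string lengths. *)

Section Oiter.
Variable T : Type.
Implicit Types (g : T -> option T) (x : T).

Lemma oiterS g k x : oiter g k.+1 x = obind g (oiter g k x).
Proof. by []. Qed.

Lemma oiterSr g k x : oiter g k.+1 x = obind (oiter g k) (g x).
Proof.
elim: k x => [|k IH] x; first by rewrite /=; case: (g x).
by rewrite oiterS IH; case: (g x).
Qed.

Lemma oiterD g k l x : oiter g (k + l) x = obind (oiter g l) (oiter g k x).
Proof.
elim: k x => [|k IH] x //.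
by rewrite addSn !oiterSr; case: (g x).
Qed.

Lemma oiter_isSome_leq g k l x :
  (l <= k)%N -> isSome (oiter g k x) -> isSome (oiter g l x).
Proof. by move=> lk; rewrite -(subnKC lk) oiterD; case: (oiter g l x). Qed.

End Oiter.

(* A partial map shifting an integer weight by a fixed nonzero amount has no
   repeated values along an orbit, so its orbits have fewer than #|T| steps. *)
Lemma isSome_oiter_bigmax (T : finType) (g : T -> option T) (w : T -> int) (c : int) :
  c != 0 -> (forall x y, g x = Some y -> w y = w x + c) ->
  forall x k, isSome (oiter g k x) =
     (k <= \max_(l < #|T|.+1 | isSome (oiter g l x)) l)%N.
Proof.
move=> c0 Hw x.
have wt_oiter k y : oiter g k x = Some y -> w y = w x + k%:Z * c.
  elim: k y => [|k IH] y /=; first by case=> ->; rewrite mul0r addr0.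
  rewrite -/(oiter g k x); case E: (oiter g k x) => [z|] //= /Hw ->.
  by rewrite (IH _ E) -addrA -{2}(mul1r c) -mulrDl -PoszD addn1.
have orbit_small k : isSome (oiter g k x) -> (k < #|T|)%N.
  move=> Hk; pose h (l : 'I_k.+1) := odflt x (oiter g l x).
  suff /leq_card : injective h by rewrite card_ord.
  move=> l1 l2; rewrite /h.
  have := oiter_isSome_leq (ltnSE (ltn_ord l1)) Hk.
  have := oiter_isSome_leq (ltnSE (ltn_ord l2)) Hk.
  case E2: (oiter g l2 x) => [y2|] //; case E1: (oiter g l1 x) => [y1|] //= _ _ e.
  subst y2; move: (wt_oiter _ _ E1); rewrite (wt_oiter _ _ E2) => /addrI /mulIf.
  by move=> /(_ c0) [] /val_inj.
move=> k; apply/idP/idP => [Hk|].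
  have Hk2 : (k < #|T|.+1)%N by apply: ltnW; apply: orbit_small.
  exact: (@leq_bigmax_cond _ (fun l : 'I_#|T|.+1 => isSome (oiter g l x))
            (fun l => nat_of_ord l) (Ordinal Hk2)).
move=> Hk; apply: (oiter_isSome_leq Hk).
apply: (big_ind (fun v => isSome (oiter g v x))) => // a a' Ha Ha'.
by rewrite /maxn; case: ltnP.
Qed.

Section IString.
Variables (I : finType) (A : I -> I -> int) (i : I).
Hypothesis Aii : A i i = 2.

Definition f_wt_step (C : crystal I) :=
  forall b b', cf C i b = Some b' -> forall l, cwt C b' l = cwt C b l - A l i.
Definition ef_inverse (C : crystal I) :=
  forall b b', ce C i b = Some b' <-> cf C i b' = Some b.
Definition i_crystal (C : crystal I) : Prop :=
  [/\ ef_inverse C, forall b, (phi C i b)%:Z - (eps C i b)%:Z = cwt C b i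
    & f_wt_step C].

Lemma isSome_oiter_f C : f_wt_step C -> forall b k,
  isSome (oiter (cf C i) k b) = (k <= phi C i b)%N.
Proof.
move=> Hw b k; apply: (@isSome_oiter_bigmax _ _ (fun x => cwt C x i) (-2)) => //.
by move=> x y /Hw ->; rewrite Aii.
Qed.

Lemma isSome_oiter_e C : ef_inverse C -> f_wt_step C -> forall b k,
  isSome (oiter (ce C i) k b) = (k <= eps C i b)%N.
Proof.
move=> Hi Hw b k; apply: (@isSome_oiter_bigmax _ _ (fun x => cwt C x i) 2) => //.
by move=> x y /Hi /Hw ->; rewrite Aii subrK.
Qed.

Section OneCrystal.
Variable C : crystal I.
Hypotheses (Hi : ef_inverse C) (Hw : f_wt_step C).

Lemma phi_eps_f x y : cf C i x = Some y ->
  (phi C i y + 1 = phi C i x)%N /\ (eps C i y = eps C i x + 1)%N.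
Proof.
move=> E; split.
  have H k : (k <= phi C i y)%N = (k + 1 <= phi C i x)%N.
    by rewrite -!isSome_oiter_f // addn1 oiterSr E.
  have := H (phi C i y); have := H (phi C i x).-1; rewrite leqnn.
  have : (0 < phi C i x)%N by rewrite -isSome_oiter_f //= E.
  by case: (phi C i x) => //= p _; lia.
have E' : ce C i y = Some x by apply/Hi.
have H k : (k + 1 <= eps C i y)%N = (k <= eps C i x)%N.
  by rewrite -!isSome_oiter_e // addn1 oiterSr E'.
have := H (eps C i x); have := H (eps C i y).-1; rewrite leqnn.
have : (0 < eps C i y)%N by rewrite -isSome_oiter_e //= E'.
by case: (eps C i y) => //= p _; lia.
Qed.

Lemma phi_eps_e x y : ce C i x = Some y ->
  (phi C i y = phi C i x + 1)%N /\ (eps C i y + 1 = eps C i x)%N.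
Proof. by move=> /Hi /phi_eps_f [-> ->]. Qed.

Lemma phi_eps_fk k x y : oiter (cf C i) k x = Some y ->
  (phi C i y + k = phi C i x)%N /\ (eps C i y = eps C i x + k)%N.
Proof.
elim: k y => [|k IH] y /=; first by case=> ->; rewrite !addn0.
rewrite -/(oiter _ k x); case E: (oiter _ k x) => [z|] //= /phi_eps_f [].
by case: (IH _ E); lia.
Qed.

Lemma phi_eps_ek k x y : oiter (ce C i) k x = Some y ->
  (phi C i y = phi C i x + k)%N /\ (eps C i y + k = eps C i x)%N.
Proof.
elim: k y => [|k IH] y /=; first by case=> ->; rewrite !addn0.
rewrite -/(oiter _ k x); case E: (oiter _ k x) => [z|] //= /phi_eps_e [].
by case: (IH _ E); lia.
Qed.

Lemma oiter_fe k x z : oiter (cf C i) k x = Some z <-> oiter (ce C i) k z = Some x.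
Proof.
elim: k x z => [|k IH] x z; first by split; case=> ->.
rewrite oiterSr oiterS; split.
  by case E: (cf C i x) => [x'|] //= /IH ->; apply/Hi.
by case E: (oiter _ k z) => [w|] //= /Hi ->; apply/IH.
Qed.

Lemma wt_oiter_f k x y : oiter (cf C i) k x = Some y ->
  forall l, cwt C y l = cwt C x l - k%:Z * A l i.
Proof.
elim: k y => [|k IH] y /=; first by case=> -> l; rewrite mul0r subr0.
rewrite -/(oiter _ k x); case E: (oiter _ k x) => [z|] //= /Hw H l.
by rewrite H (IH _ E) intS; ring.
Qed.

Lemma wt_oiter_e k x y : oiter (ce C i) k x = Some y ->
  forall l, cwt C y l = cwt C x l + k%:Z * A l i.
Proof. by move=> /oiter_fe H l; rewrite (wt_oiter_f H l); ring. Qed.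

End OneCrystal.

Section Tensor.
Variables C1 C2 : crystal I.
Hypotheses (Hi1 : ef_inverse C1) (Hw1 : f_wt_step C1).
Hypotheses (Hi2 : ef_inverse C2) (Hw2 : f_wt_step C2).
Let TC := tensor C1 C2.

Lemma tensor_ef_inverse : ef_inverse TC.
Proof.
move=> [x1 x2] [y1 y2] /=; split.
  case: (leqP (eps C2 i x2) (phi C1 i x1)) => h.
    case E: (ce C1 i x1) => [z|] //= [<- <-].
    have [p1 _] := phi_eps_e Hi1 Hw1 E.
    rewrite ifT; last by lia.
    by have -> : cf C1 i z = Some x1 by apply/Hi1.
  case E: (ce C2 i x2) => [z|] //= [<- <-].
  have [_ p1] := phi_eps_e Hi2 Hw2 E.
  rewrite ifF; last by lia.
  by have -> : cf C2 i z = Some x2 by apply/Hi2.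
case: (ltnP (eps C2 i y2) (phi C1 i y1)) => h.
  case E: (cf C1 i y1) => [z|] //= [<- <-].
  have [p1 _] := phi_eps_f Hi1 Hw1 E.
  rewrite ifT; last by lia.
  by have -> : ce C1 i z = Some y1 by apply/Hi1.
case E: (cf C2 i y2) => [z|] //= [<- <-].
have [_ p1] := phi_eps_f Hi2 Hw2 E.
rewrite ifF; last by lia.
by have -> : ce C2 i z = Some y2 by apply/Hi2.
Qed.

Lemma tensor_f_wt_step : f_wt_step TC.
Proof.
move=> [x1 x2] [y1 y2] /=; case: ifP => _.
  by case E: (cf C1 i x1) => [z|] //= [<- <-] l; rewrite !ffunE (Hw1 E); ring.
by case E: (cf C2 i x2) => [z|] //= [<- <-] l; rewrite !ffunE (Hw2 E); ring.
Qed.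

Section TensorStrings.
Variables (x1 : ctype C1) (x2 : ctype C2).
Let p := (phi C1 i x1 - eps C2 i x2)%N.
Let q := (eps C2 i x2 - phi C1 i x1)%N.

Lemma oiter_f_tensor k :
  oiter (cf TC i) k (x1, x2) =
  obind (fun y1 => omap (pair y1) (oiter (cf C2 i) (k - minn k p) x2))
        (oiter (cf C1 i) (minn k p) x1).
Proof.
elim: k => [|k IH]; first by rewrite min0n.
rewrite oiterS IH; case: (ltnP k p) => hk.
  rewrite (minn_idPl hk) !subnn oiterS; case E: (oiter _ k x1) => [z|] //=.
  have [h _] := phi_eps_fk Hi1 Hw1 E.
  by rewrite ifT; [case: (cf C1 i z) | lia].
rewrite (minn_idPr (leqW hk)) subSn // oiterS.
case E1: (oiter _ p x1) => [y1|] //=; case E2: (oiter _ (k - p) x2) => [z2|] //=.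
have [h1 _] := phi_eps_fk Hi1 Hw1 E1; have [_ h2] := phi_eps_fk Hi2 Hw2 E2.
by rewrite ifF; [case: (cf C2 i z2) | lia].
Qed.

Lemma oiter_e_tensor k :
  oiter (ce TC i) k (x1, x2) =
  obind (fun y2 => omap (fun y1 => (y1, y2)) (oiter (ce C1 i) (k - minn k q) x1))
        (oiter (ce C2 i) (minn k q) x2).
Proof.
elim: k => [|k IH]; first by rewrite min0n.
rewrite oiterS IH; case: (ltnP k q) => hk.
  rewrite (minn_idPl hk) !subnn oiterS; case E: (oiter _ k x2) => [z|] //=.
  have [_ h] := phi_eps_ek Hi2 Hw2 E.
  by rewrite ifF; [case: (ce C2 i z) | lia].
rewrite (minn_idPr (leqW hk)) subSn // oiterS.
case E2: (oiter _ q x2) => [y2|] //=; case E1: (oiter _ (k - q) x1) => [z1|] //=.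
have [_ h2] := phi_eps_ek Hi2 Hw2 E2; have [h1 _] := phi_eps_ek Hi1 Hw1 E1.
by rewrite ifT; [case: (ce C1 i z1) | lia].
Qed.

Lemma phi_tensor : phi TC i (x1, x2) = (p + phi C2 i x2)%N.
Proof.
apply/eqP/eqn_geP => k; rewrite -isSome_oiter_f ?oiter_f_tensor; last first.
  exact: tensor_f_wt_step.
have : isSome (oiter (cf C1 i) (minn k p) x1) by rewrite isSome_oiter_f //; lia.
case: (oiter _ _ x1) => [y1|] //= _.
have -> : (k <= p + phi C2 i x2)%N = (k - minn k p <= phi C2 i x2)%N.
  by apply/idP/idP; lia.
by rewrite -isSome_oiter_f //; case: (oiter _ _ x2).
Qed.

Lemma eps_tensor : eps TC i (x1, x2) = (q + eps C1 i x1)%N.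
Proof.
apply/eqP/eqn_geP => k; rewrite -isSome_oiter_e ?oiter_e_tensor; first last.
- exact: tensor_f_wt_step.
- exact: tensor_ef_inverse.
have : isSome (oiter (ce C2 i) (minn k q) x2) by rewrite isSome_oiter_e //; lia.
case: (oiter _ _ x2) => [y2|] //= _.
have -> : (k <= q + eps C1 i x1)%N = (k - minn k q <= eps C1 i x1)%N.
  by apply/idP/idP; lia.
by rewrite -isSome_oiter_e //; case: (oiter _ _ x1).
Qed.

End TensorStrings.
End Tensor.

Lemma tensor_i_crystal C1 C2 :
  i_crystal C1 -> i_crystal C2 -> i_crystal (tensor C1 C2).
Proof.
move=> [Hi1 Hr1 Hw1] [Hi2 Hr2 Hw2]; split.
- exact: tensor_ef_inverse.
- by move=> [x1 x2]; rewrite phi_tensor // eps_tensor // /= ffunE -Hr1 -Hr2; lia.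
- exact: tensor_f_wt_step.
Qed.

Lemma unit_i_crystal : i_crystal (unitC I).
Proof.
have Hw : f_wt_step (unitC I) by [].
have Hi : ef_inverse (unitC I) by [].
split=> // b; rewrite /= ffunE.
have := isSome_oiter_f Hw b 1; have := isSome_oiter_e Hi Hw b 1.
by case: (phi _ i b); case: (eps _ i b).
Qed.

Lemma tailpow_i_crystal B j : i_crystal B -> i_crystal (tailpow B j).
Proof.
move=> HB; elim: j => [|j IH] /=; first exact: unit_i_crystal.
exact: tensor_i_crystal.
Qed.

Definition on_string (B R : crystal I) (b : ctype B) (c : Pcl I) (d : int)
    (x : ctype (tensor B R)) :=
  exists2 t : nat, (t <= phi B i b)%N &
    oiter (cf B i) t b = Some x.1 /\
    forall l, cwt R x.2 l = c l + (t%:Z - d) * A l i.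

Lemma mem_bigcup_Pj (B : crystal I) j b (c : Pcl I) d (nu : nat -> P I) :
  (forall (t : nat) l, cl (nu t) l = c l + (t%:Z - d) * A l i) ->
  forall x, x \in \bigcup_(t < (phi B i b).+1) Pj j (oiter (cf B i) t b) (nu t)
    <-> on_string b c d x.
Proof.
move=> nuE x; split.
  move=> /bigcupP [t _]; rewrite inE => /andP [/eqP E1 /eqP E2].
  exists t; first exact: ltnSE (ltn_ord t).
  by split=> [|l]; rewrite ?E1 // E2 nuE.
move=> [t ht [E1 E2]]; apply/bigcupP; exists (Ordinal (ht : (t < _.+1)%N)) => //.
by rewrite inE /= E1 eqxx /=; apply/eqP/ffunP => l; rewrite E2 nuE.
Qed.

Section Strings.
Variables (B R : crystal I) (b : ctype B) (c : Pcl I) (n : nat).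
Hypotheses (HB : i_crystal B) (HR : i_crystal R).
Hypothesis Hn : n%:Z = c i + phi B i b.

Lemma f_on_string x : on_string b c 0 x ->
  exists2 y, oiter (cf (tensor B R) i) n x = Some y & on_string b c n y.
Proof.
case: HB HR => [iB _ wB] [iR rR wR].
case: x => a r [t ht [/= Ea Er]].
have [pa _] := phi_eps_fk iB wB Ea.
have := rR r; rewrite Er Aii => rr.
rewrite oiter_f_tensor //; set s := minn n _.
have : isSome (oiter (cf B i) s a) by rewrite isSome_oiter_f //; lia.
case Ea': (oiter _ s a) => [a'|] //= _.
have : isSome (oiter (cf R i) (n - s) r) by rewrite isSome_oiter_f //; lia.
case Er': (oiter _ _ r) => [r'|] //= _.
exists (a', r') => //; exists (t + s)%N; first lia.
split=> [|l] /=; first by rewrite oiterD Ea.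
by rewrite (wt_oiter_f wR Er' l) Er -subzn ?geq_minl // PoszD; ring.
Qed.

Lemma e_on_string y : on_string b c n y ->
  exists2 x, oiter (ce (tensor B R) i) n y = Some x & on_string b c 0 x.
Proof.
case: HB HR => [iB _ wB] [iR rR wR].
case: y => a' r' [t' ht [/= Ea Er]].
have [pa _] := phi_eps_fk iB wB Ea.
have := rR r'; rewrite Er Aii => rr.
rewrite oiter_e_tensor //; set s := minn n _.
have : isSome (oiter (ce R i) s r') by rewrite isSome_oiter_e //; lia.
case Er0: (oiter _ s r') => [r|] //= _.
have hs : (n - s <= t')%N by lia.
have : isSome (oiter (cf B i) (t' - (n - s)) b) by rewrite isSome_oiter_f //; lia.
case Ea0: (oiter _ _ b) => [a|] // _.
have Ea'' : oiter (cf B i) (n - s) a = Some a'.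
  by move: Ea; rewrite -(subnK hs) oiterD Ea0.
rewrite ((oiter_fe iB _ _ _).1 Ea'') /=.
exists (a, r) => //; exists (t' - (n - s))%N; first lia.
split=> // l /=.
by rewrite (wt_oiter_e iR wR Er0 l) Er -(subzn hs) -subzn ?geq_minl //; ring.
Qed.

End Strings.
End IString.

Lemma is_crystal_i_crystal (I : finType) (A : I -> I -> int) (i0 i : I)
    (C : crystal I) :
  is_crystal A i0 C -> i_crystal A i C.
Proof.
case=> Hi Hr Hw; split=> // b b' /Hw -> l.
by rewrite /subPcl /cl /alpha !ffunE.
Qed.

Lemma cl_addP_scaleP_alpha (I : finType) (A : I -> I -> int) (i0 i : I)
    (mu : P I) (k : int) l :
  cl (addP mu (scaleP k (alpha A i0 i))) l = cl mu l + k * A l i.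
Proof. by rewrite /cl /addP /scaleP /alpha /= !ffunE. Qed.

Lemma cl_refl (I : finType) (A : I -> I -> int) (i0 i : I) (nu : P I) l :
  cl (refl A i0 i nu) l = cl nu l - cl nu i * A l i.
Proof. by rewrite /refl cl_addP_scaleP_alpha mulNr. Qed.

Theorem mainTheorem4 (I : finType) (A : I -> I -> int) (i0 : I)
  (HA : affine_cartan A) (B : crystal I) (HB : is_crystal A i0 B)
  (b : ctype B) (i : I) (m : nat) (Hm : m = phi B i b) (j : nat) (mu : P I)
  (n : nat) (Hn : n%:Z = pairing i mu + m%:Z) :
  let S := \bigcup_(t < m.+1)
             Pj j (oiter (cf B i) t b) (addP mu (scaleP t%:Z (alpha A i0 i))) in
  let T := \bigcup_(t < m.+1)
             Pj j (oiter (cf B i) t b)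
                (refl A i0 i (addP mu (scaleP (m%:Z - t%:Z) (alpha A i0 i)))) in
  let F := oiter (cf (tpow B j) i) n in
  [/\ forall x, x \in S -> exists2 y, F x = Some y & y \in T,
      forall x y, x \in S -> y \in S -> F x = F y -> x = y &
      forall y, y \in T -> exists2 x, x \in S & F x = Some y].
Proof.
move=> S T F; subst m.
have Aii : A i i = 2 by case: HA => [[]].
have iB : i_crystal A i B := is_crystal_i_crystal i HB.
have iR := tailpow_i_crystal Aii j iB.
have [iCe _ _] := tensor_i_crystal Aii iB iR.
have memS x : x \in S <-> on_string A i b (cl mu) 0 x.
  apply: (mem_bigcup_Pj b (nu := fun t => addP mu (scaleP t%:Z (alpha A i0 i)))).
  by move=> t l; rewrite cl_addP_scaleP_alpha subr0.
have memT x : x \in T <-> on_string A i b (cl mu) n x.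
  pose nu t :=
    refl A i0 i (addP mu (scaleP ((phi B i b)%:Z - t%:Z) (alpha A i0 i))).
  apply: (mem_bigcup_Pj b (nu := nu)) => t l.
  by rewrite cl_refl !cl_addP_scaleP_alpha Aii Hn; ring.
split.
- by move=> x /memS /(f_on_string Aii iB iR Hn) [y Fy /memT Ty]; exists y.
- move=> x y /memS /(f_on_string Aii iB iR Hn) [z Fx _] _ Fxy.
  have Fy : F y = Some z by rewrite -Fxy.
  by move: ((oiter_fe iCe _ _ _).1 Fx) ((oiter_fe iCe _ _ _).1 Fy) => -> [].
- move=> y /memT /(e_on_string Aii iB iR Hn) [x Ex /memS Sx].
  by exists x => //; apply/(oiter_fe iCe).
Qed.
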